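(* Let $(X,\mathcal T,P,\leq,\{\sigma_x:x\in X\})$ be a typed topological space with $X$ finite. For any subset $D\subseteq X$ and any type $p\in P$ there is a unique partition $D=D_1\cup D_2\cup\dots\cup D_t$ such that each $D_i$ is $p$-closure connected and the union of any two or more of the $D_i$'s is not $p$-closure connected.
   Context: A typed topological space $(X,\mathcal T,P,\leq,\{\sigma_x:x\in X\})$ consists of a topological space $(X,\mathcal T)$, a partially ordered set $(P,\leq)$ of types, and for each $x\in X$ a partial function $\sigma_x:\{O\in\mathcal T:x\in O\}\to P$ such that for all $U,V$ in its domain, $\sigma_x(U)\leq\sigma_x(V)$ iff $U\subseteq V$. $U$ is a type-$p$ neighborhood of $x$ if $U$ is in the domain of $\sigma_x$ and $\sigma_x(U)=p$. $x$ is a $p$-accumulation point of $A$ if every type-$p$ neighborhood of $x$ meets $A$. $p\vdash CL_1(A)=A\cup\{p\text{-accumulation points of }A\}$, $p\vdash CL_n(A)=p\vdash CL_1(p\vdash CL_{n-1}(A))$, $p\vdash tr(A)=\bigcup_{n\ge1}p\vdash CL_n(A)$. Two sets $E,E'$ are $p$-closure disjoint if $p\vdash tr(E)\cap p\vdash tr(E')=\emptyset$. A set $D$ is $p$-closure connected if it cannot be partitioned into two non-empty $p$-closure disjoint subsets. *)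

From HB Require Import structures.
From mathcomp Require Import all_boot all_order.
Set Implicit Arguments. Unset Strict Implicit. Unset Printing Implicit Defensive.
Import Order.Theory.

Section TypedTop.
Variables (X : finType) (d : Order.disp_t) (P : porderType d).

Definition is_topology (T : {set {set X}}) : Prop :=
  [/\ setT \in T,
      (forall F : {set {set X}}, F \subset T -> \bigcup_(U in F) U \in T) &
      (forall U V, U \in T -> V \in T -> U :&: V \in T)].

(* sigma x is a partial function (None = undefined) from the open
   neighbourhoods of x to P, with sigma_x U <= sigma_x V iff U ⊆ V. *)
Definition is_typed_topology (T : {set {set X}}) (sigma : X -> {set X} -> option P)
  : Prop :=
  [/\ is_topology T,
      (forall x U p, sigma x U = Some p -> U \in T /\ x \in U) &
      (forall x U V p q, sigma x U = Some p -> sigma x V = Some q ->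
         ((p <= q)%O <-> U \subset V))].

Variable sigma : X -> {set X} -> option P.

Definition type_nbhd (p : P) (x : X) (U : {set X}) : bool := sigma x U == Some p.

Definition p_acc (p : P) (A : {set X}) (x : X) : bool :=
  [forall U, type_nbhd p x U ==> (U :&: A != set0)].

Definition CL1 (p : P) (A : {set X}) : {set X} := A :|: [set x | p_acc p A x].

(* CLn p n A = p |- CL_n(A) for n >= 1 (CLn p 0 A = A). *)
Definition CLn (p : P) (n : nat) (A : {set X}) : {set X} := iter n (CL1 p) A.

Definition ptr (p : P) (A : {set X}) (x : X) : Prop :=
  exists n, (1 <= n)%N /\ x \in CLn p n A.

Definition closure_disjoint (p : P) (E E' : {set X}) : Prop :=
  ~ (exists x, ptr p E x /\ ptr p E' x).

Definition closure_connected (p : P) (D : {set X}) : Prop :=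
  ~ (exists E E' : {set X},
       [/\ E != set0, E' != set0, E :|: E' = D, E :&: E' = set0 &
           closure_disjoint p E E']).

Definition good_partition (p : P) (D : {set X}) (Q : {set {set X}}) : Prop :=
  [/\ partition Q D,
      (forall B, B \in Q -> closure_connected p B) &
      (forall S : {set {set X}}, S \subset Q -> (2 <= #|S|)%N ->
         ~ closure_connected p (\bigcup_(B in S) B))].

End TypedTop.

(* Each point x has at most one type-p neighbourhood, because sigma_x is an
   order embedding.  Hence x is a p-accumulation point of a nonempty union iff
   it is one of some member (nonemptiness matters: a point without type-p
   neighbourhood accumulates at every set, even the empty one), so the p-trace
   of a nonempty set is the union of the p-traces of its points.  Call x and y
   linked when their p-traces meet: two nonempty sets are p-closure disjoint iff
   no point of one is linked to a point of the other, and p-closure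
   connectedness becomes connectedness for the graph "linked".  The partition
   is then that of D into the connected components of this graph restricted to
   D.  It is unique because a connected subset of D lies in a single block of
   any such partition: the blocks it meets have a connected union. *)

From mathcomp Require Import all_boot all_order boolp.
Set Implicit Arguments. Unset Strict Implicit. Unset Printing Implicit Defensive.

Section SeparatedPartition.
Variables (X : finType) (r : rel X).
Hypothesis r_sym : symmetric r.

Definition separated (E F : {set X}) : Prop := {in E & F, forall x y, ~~ r x y}.

Definition rconnected (D : {set X}) : Prop :=
  ~ exists E F : {set X},
      [/\ E != set0, F != set0, E :|: F = D, E :&: F = set0 & separated E F].

Definition component_partition (D : {set X}) (Q : {set {set X}}) : Prop :=
  [/\ partition Q D,
      (forall B, B \in Q -> rconnected B) &
      (forall S : {set {set X}}, S \subset Q -> (2 <= #|S|)%N ->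
         ~ rconnected (\bigcup_(B in S) B))].

Lemma separated_sym E F : separated E F -> separated F E.
Proof. by move=> sepEF x y xF yE; rewrite r_sym sepEF. Qed.

Lemma rconnected_subU C E F :
  rconnected C -> C \subset E :|: F -> separated E F -> C \subset E \/ C \subset F.
Proof.
move=> connC sCEF sepEF.
have [|CnE] := boolP (C \subset E); first by left.
have [CE0|CE_n0] := eqVneq (C :&: E) set0.
  right; apply/subsetP => x xC; move/subsetP/(_ x xC): sCEF; rewrite inE.
  by case/orP => // xE; move/setP/(_ x): CE0; rewrite !inE xC xE.
exfalso; apply: connC; exists (C :&: E), (C :\: E); split.
- exact: CE_n0.
- by rewrite setD_eq0.
- exact: setID.
- by apply/setP => x; rewrite !inE; case: (x \in E); rewrite ?andbF.
- move=> x y /setIP[_ xE] /setDP[yC yE]; apply: sepEF => //.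
  by move/subsetP/(_ y yC): sCEF; rewrite inE (negbTE yE).
Qed.

Lemma rconnected_bigcup C (S : {set {set X}}) :
  rconnected C -> C \subset \bigcup_(A in S) A ->
  (forall A, A \in S -> rconnected A /\ A :&: C != set0) ->
  rconnected (\bigcup_(A in S) A).
Proof.
move=> connC sCU connS [E [F [nE nF EF IEF sepEF]]].
have sCEF : C \subset E :|: F by rewrite EF.
wlog CE : E F nE nF EF IEF sepEF sCEF / C \subset E => [hwlog|].
  case: (rconnected_subU connC sCEF sepEF) => [CE|CF]; first exact: (hwlog E F).
  by apply: (hwlog F E); rewrite 1?setUC 1?setIC //; apply: separated_sym.
have disjEF z : z \in E -> z \in F -> False.
  by move=> zE zF; move/setP/(_ z): IEF; rewrite !inE zE zF.
have SE A : A \in S -> A \subset E.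
  move=> AS; have [connA /set0Pn[z /setIP[zA zC]]] := connS A AS.
  have sAEF : A \subset E :|: F by rewrite EF (bigcup_sup _ AS).
  case: (rconnected_subU connA sAEF sepEF) => // AF.
  by case: (disjEF z); [apply: subsetP CE z zC | apply: subsetP AF z zA].
case/set0Pn: nF => z zF.
have /bigcupP[A AS zA] : z \in \bigcup_(A in S) A by rewrite -EF inE zF orbT.
exact: disjEF z (subsetP (SE A AS) z zA) zF.
Qed.

Lemma component_partition_block D Q C :
  component_partition D Q -> rconnected C -> C \subset D -> C != set0 ->
  exists2 B, B \in Q & C \subset B.
Proof.
move=> [partQ connQ nconnQ] connC sCD /set0Pn[x xC].
pose S := [set A in Q | A :&: C != set0].
have sSQ : S \subset Q by apply/subsetP => A; rewrite inE => /andP[].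
have sCS : C \subset \bigcup_(A in S) A.
  apply/subsetP => y yC; have := subsetP sCD y yC.
  rewrite -(cover_partition partQ) => /bigcupP[A AQ yA].
  by apply/bigcupP; exists A => //; rewrite inE AQ; apply/set0Pn; exists y; rewrite inE yA.
have small_S : (#|S| <= 1)%N.
  rewrite leqNgt; apply/negP => /(nconnQ S sSQ); apply.
  apply: rconnected_bigcup connC sCS _ => A; rewrite inE => /andP[AQ nAC].
  by split => //; apply: connQ.
have /bigcupP[B BS _] := subsetP sCS x xC.
exists B; first exact: subsetP sSQ B BS.
apply/subsetP => y yC; have /bigcupP[A AS yA] := subsetP sCS y yC.
by rewrite -(card_le1_eqP small_S A B AS BS) in yA.
Qed.

Lemma component_partition_sub D Q Q' :
  component_partition D Q -> component_partition D Q' -> Q \subset Q'.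
Proof.
move=> compQ compQ'; have [partQ connQ _] := compQ; have [partQ' connQ' _] := compQ'.
apply/subsetP => B BQ; have nB := partition_neq0 partQ BQ.
have [B' B'Q' sBB'] :=
  component_partition_block compQ' (connQ B BQ) (partitionS partQ BQ) nB.
have [x xB] := set0Pn _ nB; have xB' := subsetP sBB' x xB.
have nB' : B' != set0 by apply/set0Pn; exists x.
have [B'' B''Q sB'B''] :=
  component_partition_block compQ (connQ' B' B'Q') (partitionS partQ' B'Q') nB'.
have trivQ := partition_trivIset partQ.
have eqB : B'' = B.
  by rewrite -(def_pblock trivQ B''Q (subsetP sB'B'' x xB')) (def_pblock trivQ BQ xB).
suff -> : B = B' by [].
by apply/eqP; rewrite eqEsubset sBB' -eqB.
Qed.

Definition component (D : {set X}) (u : X) : {set X} :=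
  [set y in D | connect [rel a b in D | r a b] u y].

Section Components.
Variable D : {set X}.
Let e := [rel a b in D | r a b].

Let e_connect_sym : connect_sym e.
Proof. by apply: sym_connect_sym => a b /=; rewrite r_sym [(a \in D) && _]andbC. Qed.

Lemma component_rconnected u : rconnected (component D u).
Proof.
move=> [E [F [/set0Pn[x xE] /set0Pn[z zF] EF IEF sepEF]]].
have reach y : y \in E :|: F -> connect e u y by rewrite EF inE => /andP[].
have closedE : closed e E.
  apply: intro_closed => // a b eab aE; have /andP[/andP[_ bD] rab] := eab.
  have ub : connect e u b.
    by apply: connect_trans (connect1 eab); rewrite reach // inE aE.
  have : b \in E :|: F by rewrite EF inE bD.
  by rewrite inE => /orP[// | bF]; move: (sepEF a b aE bF); rewrite rab.
have xz : connect e x z.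
  have ux : connect e u x by rewrite reach // inE xE.
  have uz : connect e u z by rewrite reach // inE zF orbT.
  by rewrite e_connect_sym in ux; apply: connect_trans ux uz.
have := closed_connect closedE xz; rewrite xE => /esym zE.
by move/setP/(_ z): IEF; rewrite !inE zE zF.
Qed.

Lemma rconnected_sub_component C x :
  rconnected C -> C \subset D -> x \in C -> C \subset component D x.
Proof.
move=> connC sCD xC.
have sepK : separated (component D x) (C :\: component D x).
  move=> a b /[!inE] /andP[aD xa] /andP[bnK bC]; apply: contra bnK => rab.
  have bD := subsetP sCD b bC.
  by rewrite bD; apply: connect_trans xa (connect1 _); rewrite /= aD bD.
have sC : C \subset component D x :|: (C :\: component D x).
  by apply/subsetP => y yC; rewrite !inE yC andbT orbN.
case: (rconnected_subU connC sC sepK) => // /subsetP/(_ x xC).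
by rewrite !inE (subsetP sCD x xC) connect0.
Qed.

Lemma component_partition_exists : exists Q, component_partition D Q.
Proof.
pose Q := equivalence_partition (connect e) D.
have eqv : {in D & &, equivalence_rel (connect e)}.
  move=> x y z _ _ _; split=> [|xy]; first exact: connect0.
  apply/idP/idP; last exact: connect_trans.
  by rewrite e_connect_sym in xy; apply: connect_trans.
have partQ : partition Q D := equivalence_partitionP eqv.
have QE B y : B \in Q -> y \in B -> B = component D y.
  move=> BQ yB; have yD := subsetP (partitionS partQ BQ) y yB.
  have trivQ := partition_trivIset partQ.
  rewrite -(def_pblock trivQ BQ yB); apply: def_pblock => //.
  - exact: imset_f.
  - by rewrite inE yD connect0.
exists Q; split => //.
  by move=> B /imsetP[u _ ->]; apply: component_rconnected.
move=> S sSQ /card_gt1P[B [B' [BS B'S neqB]]] connS.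
have sSD : \bigcup_(A in S) A \subset D.
  by apply/bigcupsP => A AS; apply: partitionS partQ (subsetP sSQ A AS).
have [BQ B'Q] := (subsetP sSQ B BS, subsetP sSQ B' B'S).
have [x xB] := set0Pn _ (partition_neq0 partQ BQ).
have [y yB'] := set0Pn _ (partition_neq0 partQ B'Q).
have xS : x \in \bigcup_(A in S) A by apply/bigcupP; exists B.
have yS : y \in \bigcup_(A in S) A by apply/bigcupP; exists B'.
have yB : y \in B.
  by rewrite (QE B x BQ xB) (subsetP (rconnected_sub_component connS sSD xS)).
by rewrite (QE B y BQ yB) (QE B' y B'Q yB') eqxx in neqB.
Qed.

End Components.

Lemma component_partition_unique D :
  exists Q, component_partition D Q /\
            (forall Q', component_partition D Q' -> Q' = Q).
Proof.
have [Q compQ] := component_partition_exists D.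
exists Q; split => // Q' compQ'.
apply/eqP; rewrite eqEsubset.
by rewrite (component_partition_sub compQ' compQ) (component_partition_sub compQ compQ').
Qed.

End SeparatedPartition.

Section TypedTopology.
Variables (X : finType) (d : Order.disp_t) (P : porderType d).
Variables (T : {set {set X}}) (sigma : X -> {set X} -> option P).
Hypothesis typed : is_typed_topology T sigma.
Variable p : P.

Lemma type_nbhd_uniq x U V :
  type_nbhd sigma p x U -> type_nbhd sigma p x V -> U = V.
Proof.
have [_ _ le_sub] := typed; move=> /eqP xU /eqP xV.
apply/eqP; rewrite eqEsubset.
by apply/andP; split; [apply/(le_sub x U V p p xU xV) | apply/(le_sub x V U p p xV xU)].
Qed.

Lemma p_acc_nbhd A x U :
  type_nbhd sigma p x U -> p_acc sigma p A x = (U :&: A != set0).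
Proof.
move=> xU; apply/forallP/idP => [/(_ U)/implyP/(_ xU) // | UA V].
by apply/implyP => xV; rewrite (type_nbhd_uniq xV xU).
Qed.

Lemma p_acc_bigcup (I : finType) (J : {set I}) (F : I -> {set X}) x : J != set0 ->
  p_acc sigma p (\bigcup_(i in J) F i) x = [exists i in J, p_acc sigma p (F i) x].
Proof.
move=> nJ; case: (pickP (type_nbhd sigma p x)) => [U xU | no_nbhd].
  rewrite (p_acc_nbhd _ xU).
  apply/set0Pn/existsP => [[y /setIP[yU /bigcupP[i iJ yF]]] | [i /andP[iJ]]].
    by exists i; rewrite iJ (p_acc_nbhd _ xU); apply/set0Pn; exists y; rewrite inE yU.
  rewrite (p_acc_nbhd _ xU) => /set0Pn[y /setIP[yU yF]].
  by exists y; rewrite inE yU; apply/bigcupP; exists i.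
have acc A : p_acc sigma p A x by apply/forallP => U; rewrite no_nbhd.
have [i iJ] := set0Pn _ nJ.
by rewrite acc; symmetry; apply/existsP; exists i; rewrite iJ acc.
Qed.

Lemma CL1_bigcup (I : finType) (J : {set I}) (F : I -> {set X}) : J != set0 ->
  CL1 sigma p (\bigcup_(i in J) F i) = \bigcup_(i in J) CL1 sigma p (F i).
Proof.
move=> nJ; rewrite /CL1 big_split /=; congr (_ :|: _).
apply/setP => x; rewrite inE p_acc_bigcup //.
apply/existsP/bigcupP => [[i /andP[iJ acc]] | [i iJ]].
  by exists i; rewrite // inE.
by rewrite inE => acc; exists i; rewrite iJ.
Qed.

Lemma CLn_bigcup (I : finType) (J : {set I}) (F : I -> {set X}) n : J != set0 ->
  CLn sigma p n (\bigcup_(i in J) F i) = \bigcup_(i in J) CLn sigma p n (F i).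
Proof.
move=> nJ; elim: n => // n IH.
by rewrite [LHS]/= -/(CLn sigma p n _) IH CL1_bigcup.
Qed.

Lemma CLn_points E n : E != set0 ->
  CLn sigma p n E = \bigcup_(y in E) CLn sigma p n [set y].
Proof.
move=> nE; rewrite -CLn_bigcup //; congr (CLn sigma p n _).
apply/setP => x; apply/idP/bigcupP => [xE | [y yE /set1P -> //]].
by exists x; rewrite ?set11.
Qed.

Lemma ptr_points E x : E != set0 ->
  ptr sigma p E x <-> exists2 y, y \in E & ptr sigma p [set y] x.
Proof.
move=> nE; split => [[n [n1]] | [y yE [n [n1 xy]]]].
  by rewrite CLn_points // => /bigcupP[y yE xy]; exists y => //; exists n.
by exists n; split => //; rewrite CLn_points //; apply/bigcupP; exists y.
Qed.

Definition linked (x y : X) : bool :=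
  `[< exists z, ptr sigma p [set x] z /\ ptr sigma p [set y] z >].

Lemma linked_sym : symmetric linked.
Proof. by move=> x y; apply/asboolP/asboolP => -[z [xz yz]]; exists z. Qed.

Lemma closure_disjoint_separated E F : E != set0 -> F != set0 ->
  closure_disjoint sigma p E F <-> separated linked E F.
Proof.
move=> nE nF; split => [disjEF x y xE yF | sepEF [z []]].
  apply/asboolP => -[z [xz yz]]; apply: disjEF; exists z.
  by split; apply/ptr_points => //; [exists x | exists y].
move=> /(ptr_points _ nE)[x xE xz] /(ptr_points _ nF)[y yF yz].
by apply: (negP (sepEF x y xE yF)); apply/asboolP; exists z.
Qed.

Lemma closure_connected_rconnected D :
  closure_connected sigma p D <-> rconnected linked D.
Proof.
split=> connD [E [F [nE nF EF IEF sepEF]]]; apply: connD; exists E, F.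
  by split => //; apply/closure_disjoint_separated.
by split => //; apply/closure_disjoint_separated.
Qed.

Lemma good_partition_component D Q :
  good_partition sigma p D Q <-> component_partition linked D Q.
Proof.
split=> -[partQ connQ nconnQ]; split => // [B /connQ | S sSQ S2].
- by move/closure_connected_rconnected.
- by move/closure_connected_rconnected; apply: nconnQ.
- by move/closure_connected_rconnected.
- by move/closure_connected_rconnected; apply: nconnQ.
Qed.

End TypedTopology.

Theorem lemma3p9 (X : finType) (d : Order.disp_t) (P : porderType d)
  (T : {set {set X}}) (sigma : X -> {set X} -> option P) :
  is_typed_topology T sigma ->
  forall (D : {set X}) (p : P),
    exists Q : {set {set X}},
      good_partition sigma p D Q /\
      (forall Q' : {set {set X}}, good_partition sigma p D Q' -> Q' = Q).
Proof.
move=> typed D p.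
have [Q [compQ uniqQ]] := component_partition_unique (linked_sym sigma p) D.
exists Q; split => [|Q' /(good_partition_component typed)]; last exact: uniqQ.
exact/(good_partition_component typed).
Qed.
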